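(* Let $G$ be an abelian Hausdorff topological group and $A\subseteq G$ with $0\notin A$. The following conditions are equivalent: (i) the Kalton map $K_A:S_A\to\overline{G}$ is continuous and its continuous extension $\overline{K_A}:P_A\to\overline{G}$ is a topologically isomorphic embedding satisfying $\overline{K_A}(P_A)\subseteq G$; (ii) the set $A$ is both absolutely summable and topologically independent in $G$.
   Context: All groups are abelian; topological groups are Hausdorff; $\overline{H}$ denotes the (Raikov) completion of a topological group $H$. For $a\in G$, $\langle a\rangle$ is the cyclic subgroup generated by $a$ with the subspace topology. $P_A=\prod_{a\in A}\langle a\rangle$ has the Tychonoff product topology and $S_A=\bigoplus_{a\in A}\langle a\rangle\subseteq P_A$ the subspace topology. The Kalton map $K_A:S_A\to G$ is the unique homomorphism extending each inclusion $\langle a\rangle\to G$. When $K_A$ is continuous it extends uniquely to a continuous homomorphism $\overline{S_A}\to\overline G$; since $\overline{S_A}=\prod_{a\in A}\overline{\langle a\rangle}\supseteq P_A$, its restriction to $P_A$ is denoted $\overline{K_A}:P_A\to\overline G$. $A$ is absolutely summable if for every family $\{z_a:a\in A\}$ of integers there is $g\in G$ such that for every neighbourhood $U$ of $0$ there is a finite $F\subseteq A$ with $g-\sum_{a\in E}z_aa\in U$ for every finite $E\subseteq A$ containing $F$. $A$ is topologically independent if $0\notin A$ and for every neighbourhood $W$ of $0$ there is a neighbourhood $U$ of $0$ such that for every finite $F\subseteq A$ and all integers $\{z_a:a\in F\}$, $\sum_{a\in F}z_aa\in U$ implies $z_aa\in W$ for all $a\in F$. *)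

From HB Require Import structures.
From mathcomp Require Import all_boot all_order all_algebra.
From mathcomp Require Import all_classical all_reals all_analysis.
Set Implicit Arguments. Unset Strict Implicit. Unset Printing Implicit Defensive.
Import Order.TTheory GRing.Theory Num.Theory.
Local Open Scope classical_set_scope.
Local Open Scope ring_scope.

Section Kalton.
Variable G : topologicalZmodType.

Definition cyc (a : G) : set G := [set x | exists k : int, x = a *~ k].

(* P_A = prod_{a in A} <a>, realised as the set of functions f : G -> G with
   f a in <a> for a in A and f x = 0 for x not in A, inside the product
   (pointwise) topology {ptws G -> G}.  Its subspace topology is the
   Tychonoff product of the subspace topologies of the <a>. *)
Definition PA (A : set G) : set {ptws G -> G} :=
  [set f | (forall a, A a -> cyc a (f a)) /\ (forall x, ~ A x -> f x = 0)].

Definition supp (f : {ptws G -> G}) : set G := [set x | f x != 0].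

Definition SA (A : set G) : set {ptws G -> G} :=
  [set f | PA A f /\ finite_set (supp f)].

Definition kalton (f : {ptws G -> G}) : G := \sum_(x \in supp f) f x.

Definition hom_on (A : set G) (h : {ptws G -> G} -> G) :=
  forall f g, PA A f -> PA A g ->
    h ((fun x => f x + g x) : {ptws G -> G}) = h f + h g.

Definition top_embedding (X Y : topologicalType) (D : set X) (h : X -> Y) :=
  [/\ {within D, continuous h}, {in D &, injective h} &
      forall x, D x -> forall U, within D (nbhs x) U ->
        exists V, nbhs (h x) V /\ (forall y, D y -> V (h y) -> U y)].

Definition kalton_condition (A : set G) :=
  {within SA A, continuous kalton} /\
  exists Phi : {ptws G -> G} -> G,
    [/\ forall f, SA A f -> Phi f = kalton f,
        hom_on A Phi &
        top_embedding (PA A) Phi].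

Definition absolutely_summable (A : set G) :=
  forall z : G -> int, exists g : G, forall U, nbhs (0 : G) U ->
    exists F : set G, [/\ finite_set F, F `<=` A &
      forall E : set G, finite_set E -> F `<=` E -> E `<=` A ->
        U (g - \sum_(a \in E) a *~ z a)].

Definition topologically_independent (A : set G) :=
  ~ A 0 /\
  forall W, nbhs (0 : G) W -> exists U, nbhs (0 : G) U /\
    forall (F : set G) (z : G -> int), finite_set F -> F `<=` A ->
      U (\sum_(a \in F) a *~ z a) -> forall a, F a -> W (a *~ z a).

End Kalton.

From HB Require Import structures.
From mathcomp Require Import all_boot all_order all_algebra.
From mathcomp Require Import all_classical all_reals all_analysis.
Import Order.TTheory GRing.Theory Num.Theory.
Local Open Scope classical_set_scope.
Local Open Scope ring_scope.

(* (ii) => (i): absolute summability lets every f in P_A be summed over A,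
   and the extension of K_A is f |-> sum_a f(a).  Its continuity rests on a
   uniform Cauchy condition: for every neighbourhood U of 0 there is a finite
   C such that all finite sums sum_(a in E) z_a a with E disjoint from C lie
   in U.  Otherwise one finds infinitely many pairwise disjoint finite "bad"
   blocks; merging their coefficients into one family z, the summability of
   z forces the blocks far out to have sums in U.  Topological independence
   says that a small value of the extension has small coordinates, which
   gives injectivity and openness onto the image.
   (i) => (ii): the finite partial sums of f = (z_a a)_a are the images of
   truncations of f, which converge to f in the product topology; and
   topological independence is the continuity of the inverse map at 0. *)

Section TopologicalZmoduleNbhs.
Context {G : topologicalZmodType}.
Implicit Types (U N : set G) (c : G).

Lemma nbhs0_splitD {U} : nbhs 0 U ->
  exists2 V : set G, nbhs 0 V & forall x y, V x -> V y -> U (x + y).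
Proof.
move=> U0; have : nbhs ((0 : G), (0 : G)) [set p : G * G | U (p.1 + p.2)].
  by apply: (add_continuous (0, 0)); rewrite /= addr0.
case=> [[V1 V2] /= [V10 V20] V12]; exists (V1 `&` V2); first exact: filterI.
by move=> x y [? _] [_ ?]; exact: (V12 (x, y)).
Qed.

Lemma nbhs0_splitB {U} : nbhs 0 U ->
  exists2 V : set G, nbhs 0 V & forall x y, V x -> V y -> U (x - y).
Proof.
move=> U0; have : nbhs ((0 : G), (0 : G)) [set p : G * G | U (p.1 - p.2)].
  by apply: (@sub_continuous G (0, 0)); rewrite /= subr0.
case=> [[V1 V2] /= [V10 V20] V12]; exists (V1 `&` V2); first exact: filterI.
by move=> x y [? _] [_ ?]; exact: (V12 (x, y)).
Qed.

Lemma nbhs0_oppr {U} : nbhs 0 U -> nbhs 0 [set w | U (- w)].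
Proof. by move=> U0; apply: (@opp_continuous G 0); rewrite oppr0. Qed.

Lemma nbhs_translate0 {c N} : nbhs c N -> nbhs 0 [set w | N (w + c)].
Proof.
move=> Nc; have : (fun w => w + c) @ nbhs (0 : G) --> 0 + c.
  apply: (@continuous_comp _ _ _ (fun w => (w, c)) (fun p : G * G => p.1 + p.2)).
    by apply: cvg_pair; [exact: cvg_id|exact: cvg_cst].
  exact: add_continuous.
by apply; rewrite add0r.
Qed.

Lemma nbhs0_translate {c U} : nbhs 0 U -> nbhs c [set y | U (y - c)].
Proof.
move=> U0; have : (fun y => y - c) @ nbhs c --> c - c.
  apply: (@continuous_comp _ _ _ (fun y => (y, c)) (fun p : G * G => p.1 - p.2)).
    by apply: cvg_pair; [exact: cvg_id|exact: cvg_cst].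
  exact: sub_continuous.
by apply; rewrite subrr.
Qed.

Lemma hausdorff_eq0 (d : G) : hausdorff_space G ->
  (forall U, nbhs 0 U -> U d) -> d = 0.
Proof.
move=> hG d0; apply: hG => P Q Pd Q0; exists d; split; last exact: d0.
exact: nbhs_singleton.
Qed.

Lemma nbhs0_fsbig {I : choiceType} {C : set I} {U} : finite_set C -> nbhs 0 U ->
  exists2 W : set G, nbhs 0 W &
    forall x : I -> G, (forall i, C i -> W (x i)) -> U (\sum_(i \in C) x i).
Proof.
move=> fC U0.
suff /(_ (finmap.enum_fset (fset_set C)) U U0) [W W0 WU] :
    forall (s : seq I) U, nbhs 0 U ->
    exists2 W : set G, nbhs 0 W &
      forall x : I -> G, (forall i, i \in s -> W (x i)) -> U (\sum_(i <- s) x i).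
  exists W => // x Wx; rewrite fsbig_finite //; apply: WU => i.
  by rewrite in_fset_set // inE; exact: Wx.
elim=> [|i s IH] {}U {}U0.
  by exists U => // x _; rewrite big_nil; exact: nbhs_singleton.
have [V V0 VV] := nbhs0_splitD U0; have [W W0 WV] := IH V V0.
exists (V `&` W); first exact: filterI.
move=> x xVW; rewrite big_cons; apply: VV; first by have [] := xVW i (mem_head _ _).
by apply: WV => j js; have [] := xVW j; rewrite ?in_cons ?js ?orbT.
Qed.

End TopologicalZmoduleNbhs.

Lemma filter_finite_bigI (T : Type) (I : choiceType) (F : set_system T)
    (C : set I) (W : I -> set T) : Filter F -> finite_set C ->
  (forall i, C i -> F (W i)) -> F [set t | forall i, C i -> W i t].
Proof.
move=> FF fC FW.
apply: filterS (@filter_bigI T I (fset_set C) W F FF _) => [t Wt i Ci|i].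
  by apply: (Wt i); rewrite /= in_fset_set ?inE.
by rewrite in_fset_set // inE => /FW.
Qed.

Lemma within_continuous_nbhsP (X Y : topologicalType) (D : set X) (h : X -> Y) :
  {within D, continuous h} <->
  forall x, D x -> forall N, nbhs (h x) N -> nbhs x [set y | D y -> N (h y)].
Proof.
rewrite subspace_continuousP; split => hc x Dx N.
  by move=> /(hc x Dx); rewrite nbhs_simpl.
by move=> /(hc x Dx); rewrite nbhs_simpl.
Qed.

Section PointwiseBoxes.
Variables (I : choiceType) (T : topologicalType).
Local Notation P := {ptws I -> T}.

Definition ptws_box (f : P) (N : set P) :=
  exists (C : set I) (V : I -> set T), [/\ finite_set C,
    forall i, C i -> nbhs (f i) (V i) &
    forall h : P, (forall i, C i -> V i (h i)) -> N h].

Lemma ptws_box_filter (f : P) : Filter (ptws_box f).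
Proof.
constructor.
- by exists set0, (fun=> setT); split.
- move=> N1 N2 [C1 [V1 [fC1 V1f N1V]]] [C2 [V2 [fC2 V2f N2V]]].
  exists (C1 `|` C2), (fun i => [set t | (C1 i -> V1 i t) /\ (C2 i -> V2 i t)]).
  split; first by rewrite finite_setU.
    move=> i _; apply: filterI.
      have [C1i|nC1i] := pselect (C1 i); first by apply: filterS (V1f _ C1i) => t.
      by apply: nearW => t /nC1i.
    have [C2i|nC2i] := pselect (C2 i); first by apply: filterS (V2f _ C2i) => t.
    by apply: nearW => t /nC2i.
  move=> h hV; split.
    by apply: N1V => i C1i; have [+ _] := hV i (or_introl C1i); apply.
  by apply: N2V => i C2i; have [_ +] := hV i (or_intror C2i); apply.
- move=> N1 N2 N12 [C [V [fC Vf NV]]]; exists C, V; split => // h /NV; exact: N12.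
Qed.

Lemma nbhs_ptwsP (f : P) (N : set P) : nbhs f N <-> ptws_box f N.
Proof.
split; last first.
  move=> [C [V [fC Vf NV]]]; apply: filterS NV _.
  apply: filter_finite_bigI => // i Ci.
  exact: (@proj_continuous I (fun=> T) i f _ (Vf i Ci)).
(* The product topology is the supremum of the initial topologies of the
   projections, so it suffices to check convergence in each of them. *)
have := @cvg_sup (I -> T) I
  (fun i => Topological.class (initial_topology (fun g : I -> T => g i)))
  (ptws_box f) f (ptws_box_filter f).
case=> _ /(_ _) boxf; apply: boxf => i.
apply/cvg_image; first exact: ptws_box_filter.
  by apply/seteqP; split => // t _; exists (fun=> t).
move=> V Vfi; exists ((fun g : I -> T => g i) @^-1` V).
  by exists [set i], (fun=> V); split => [|_ ->//|h]; [exact: finite_set1|apply].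
by apply/seteqP; split => [t [g Vg <-]//|t Vt]; exists (fun=> t).
Qed.

End PointwiseBoxes.

Definition has_sum {G : topologicalZmodType} {I : choiceType} (A : set I)
    (f : I -> G) (s : G) := forall U, nbhs 0 U ->
  exists F : set I, [/\ finite_set F, F `<=` A &
    forall E, finite_set E -> F `<=` E -> E `<=` A -> U (s - \sum_(i \in E) f i)].

Section UnorderedSum.
Context {G : topologicalZmodType} {I : choiceType} {A : set I}.
Implicit Types (f g : I -> G) (s t : G).

Lemma has_sum_unique {f s t} : hausdorff_space G ->
  has_sum A f s -> has_sum A f t -> s = t.
Proof.
move=> hG fs ft; apply/eqP; rewrite -subr_eq0; apply/eqP.
apply: hausdorff_eq0 => // U U0; have [V V0 VV] := nbhs0_splitB U0.
have [F1 [fF1 F1A F1s]] := fs V V0; have [F2 [fF2 F2A F2t]] := ft V V0.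
have fF : finite_set (F1 `|` F2) by rewrite finite_setU.
have FA : F1 `|` F2 `<=` A by move=> x [/F1A|/F2A].
have := VV _ _ (F1s _ fF (@subsetUl _ _ _) FA) (F2t _ fF (@subsetUr _ _ _) FA).
by rewrite opprB addrA subrK.
Qed.

Lemma has_sumD {f g s t} : has_sum A f s -> has_sum A g t ->
  has_sum A (fun i => f i + g i) (s + t).
Proof.
move=> fs gt U U0; have [V V0 VV] := nbhs0_splitD U0.
have [F1 [fF1 F1A F1s]] := fs V V0; have [F2 [fF2 F2A F2t]] := gt V V0.
exists (F1 `|` F2); split; first by rewrite finite_setU.
  by move=> x [/F1A|/F2A].
move=> E fE FE EA; rewrite fsbig_split //.
have := VV _ _ (F1s E fE (subset_trans (@subsetUl _ _ _) FE) EA)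
               (F2t E fE (subset_trans (@subsetUr _ _ _) FE) EA).
by rewrite opprD addrACA.
Qed.

Lemma has_sum_finite f (S : set I) : finite_set S -> S `<=` A ->
  (forall i, ~ S i -> f i = 0) -> has_sum A f (\sum_(i \in S) f i).
Proof.
move=> fS SA f0 U U0; exists S; split => // E fE SE EA.
rewrite -(fsbig_widen _ _ _ SE) ?subrr; first exact: nbhs_singleton.
by move=> i [_ /f0].
Qed.

End UnorderedSum.

Section DisjointBlocks.
Context {T : choiceType} {E : nat -> set T}.
Hypothesis E_disj : forall m n x, E m x -> E n x -> m = n.

Definition block_index (x : T) : nat := xget 0%N [set n | E n x].

Lemma block_indexE {n x} : E n x -> block_index x = n.
Proof.
by move=> Enx; exact: E_disj (xgetPex 0%N (ex_intro (fun m => E m x) n Enx)) Enx.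
Qed.

Lemma block_avoid {F : set T} : finite_set F ->
  exists n, forall x, F x -> ~ E n x.
Proof.
move=> fF.
exists (\max_(x <- finmap.enum_fset (fset_set F)) block_index x).+1 => x Fx Ex.
have : (block_index x <= \max_(y <- finmap.enum_fset (fset_set F)) block_index y)%N.
  by apply: leq_bigmax_seq => //; rewrite in_fset_set // inE.
by rewrite (block_indexE Ex) ltnn.
Qed.

End DisjointBlocks.

Lemma disjoint_block_sequence (T B : Type) (blk : B -> set T) (P : B -> Prop) :
  (forall C, finite_set C -> exists b,
    [/\ finite_set (blk b), forall x, blk b x -> ~ C x & P b]) ->
  exists s : nat -> B, (forall n, finite_set (blk (s n)) /\ P (s n)) /\
    forall m n x, blk (s m) x -> blk (s n) x -> m = n.
Proof.
move=> step; have [b0 _] := step set0 (finite_set0 T).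
have /choice [next nextP] : forall C, exists b, finite_set C ->
    [/\ finite_set (blk b), forall x, blk b x -> ~ C x & P b].
  move=> C; have [fC|nfC] := pselect (finite_set C); last by exists b0.
  by have [b] := step C fC; exists b.
pose D := fix D n := if n is m.+1 then D m `|` blk (next (D m)) else set0.
have fD n : finite_set (D n).
  elim: n => [|n fD] /=; first exact: finite_set0.
  by have [fb _ _] := nextP _ fD; rewrite finite_setU.
have sub_D m n : (m < n)%N -> blk (next (D m)) `<=` D n.
  elim: n => // n IH; rewrite ltnS leq_eqVlt => /predU1P [-> x|/IH mD x /mD];
    by [right|left].
exists (fun n => next (D n)); split.
  by move=> n; have [? _ ?] := nextP _ (fD n).
have disj m n x : (m < n)%N -> blk (next (D m)) x -> ~ blk (next (D n)) x.
  move=> mn xm xn; have [_ nD _] := nextP _ (fD n).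
  exact: nD xn (sub_D _ _ mn _ xm).
move=> m n x xm xn; case: (ltngtP m n) => // mn; exfalso.
  exact: disj mn xm xn.
exact: disj mn xn xm.
Qed.

Section CyclicProduct.
Context {G : topologicalZmodType} {A : set G}.
Local Notation T := {ptws G -> G}.
Implicit Types (f g : T) (E : set G).

Lemma cyc0 (a : G) : cyc a 0.
Proof. by exists 0; rewrite mulr0z. Qed.

Lemma cycD (a x y : G) : cyc a x -> cyc a y -> cyc a (x + y).
Proof. by move=> [k ->] [l ->]; exists (k + l); rewrite mulrzDr. Qed.

Lemma cycN (a x : G) : cyc a x -> cyc a (- x).
Proof. by move=> [k ->]; exists (- k); rewrite mulrNz. Qed.

Lemma PA0 : PA A (fun _ => 0).
Proof. by split => [a _|//]; exact: cyc0. Qed.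

Lemma PAD {f g} : PA A f -> PA A g -> PA A (fun x => f x + g x).
Proof.
move=> [fA f0] [gA g0]; split => [a Aa|x nAx]; first exact: cycD (fA _ Aa) (gA _ Aa).
by rewrite f0 // g0 // addr0.
Qed.

Lemma PAB {f g} : PA A f -> PA A g -> PA A (fun x => f x - g x).
Proof.
move=> Pf [gA g0]; apply: PAD Pf _.
split => [a Aa|x nAx]; first exact: cycN (gA _ Aa).
by rewrite g0 // oppr0.
Qed.

Lemma PA_patch E {f} : PA A f -> PA A (patch (fun=> 0) E f).
Proof.
move=> [fA f0]; split => [a Aa|x nAx]; rewrite /patch; case: ifP => // _.
- exact: fA.
- exact: cyc0.
- exact: f0.
Qed.

Lemma PA_multiples (z : G -> int) : PA A (patch (fun=> 0) A (fun a => a *~ z a)).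
Proof.
split => [a Aa|x nAx]; rewrite /patch.
  by rewrite mem_set //; exists (z a).
by case: ifPn => // /set_mem /nAx.
Qed.

Lemma supp_PA {f} : PA A f -> supp f `<=` A.
Proof.
move=> [_ f0] x fx; apply: contrapT => nAx.
by move: fx; rewrite /supp /= f0 // eqxx.
Qed.

Lemma supp_patch E f : supp (patch (fun=> 0) E f) `<=` E.
Proof.
by move=> x; rewrite /supp /= /patch; case: ifPn => [/set_mem|]; rewrite ?eqxx.
Qed.

Lemma SA_patch {E f} : PA A f -> finite_set E -> SA A (patch (fun=> 0) E f).
Proof.
move=> Pf fE; split; first exact: PA_patch.
exact: sub_finite_set (supp_patch E f) fE.
Qed.

Lemma kalton_patch E f : kalton (patch (fun=> 0) E f) = \sum_(x \in E) f x.
Proof.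
rewrite /kalton (fsbig_widen _ _ _ (supp_patch E f)); last first.
  by move=> x [_]; rewrite /supp /= => /negP; rewrite negbK => /eqP.
by apply: eq_fsbigr => x Ex; rewrite patchT.
Qed.

Lemma has_sum_kalton {f} : SA A f -> has_sum A f (kalton f).
Proof.
move=> [Pf fs]; apply: has_sum_finite => //; first exact: supp_PA.
by move=> x; rewrite /supp /= => /negP; rewrite negbK => /eqP.
Qed.

Definition cyc_coef f (a : G) : int := xget 0 [set k | f a = a *~ k].

Lemma cyc_coefE {f a} : PA A f -> A a -> f a = a *~ cyc_coef f a.
Proof. by move=> [fA _] Aa; have := xgetPex 0 (fA a Aa). Qed.

Lemma fsbig_cyc_coef {f E} : PA A f -> E `<=` A ->
  \sum_(a \in E) a *~ cyc_coef f a = \sum_(a \in E) f a.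
Proof.
move=> Pf EA; apply: eq_fsbigr => a /set_mem Ea.
by rewrite -cyc_coefE //; exact: EA.
Qed.

End CyclicProduct.

Lemma absolutely_summable_small_blocks {G : topologicalZmodType} {A : set G}
    {U : set G} : absolutely_summable A -> nbhs 0 U ->
  exists2 C : set G, finite_set C &
    forall (z : G -> int) E, finite_set E -> E `<=` A -> (forall x, E x -> ~ C x) ->
      U (\sum_(a \in E) a *~ z a).
Proof.
move=> AS U0; have [V V0 VV] := nbhs0_splitB U0.
apply: contrapT => noC.
have /(@disjoint_block_sequence _ _ snd) [s [sP s_disj]] : forall C, finite_set C ->
    exists b : (G -> int) * set G, [/\ finite_set b.2, forall x, b.2 x -> ~ C x &
      b.2 `<=` A /\ ~ U (\sum_(a \in b.2) a *~ b.1 a)].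
  move=> C fC; apply: contrapT => noE; apply: noC; exists C => // z E fE EA EC.
  by apply: contrapT => nU; apply: noE; exists (z, E).
pose z x := (s (@block_index _ (fun n => (s n).2) x)).1 x.
have [g /(_ V V0) [F [fF FA Fg]]] := AS z.
have [n nF] := block_avoid s_disj fF.
have [fE [EA]] := sP n; apply.
have fFE : finite_set (F `|` (s n).2) by rewrite finite_setU.
have FEA : F `|` (s n).2 `<=` A by rewrite subUset.
have := VV _ _ (Fg _ fF (@subset_refl _ F) FA) (Fg _ fFE (@subsetUl _ _ _) FEA).
rewrite fsbigU0 //; last by move=> x [Fx Ex]; exact: nF x Fx Ex.
rewrite opprB addrC addrA subrK [X in X - _]addrC addrK.
congr (U _); apply: eq_fsbigr => x /set_mem Ex.
by rewrite /z (block_indexE s_disj Ex).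
Qed.

Section KaltonExtension.
Context {G : topologicalZmodType} (A : set G).
Hypotheses (hG : hausdorff_space G) (AS : absolutely_summable A).
Local Notation T := {ptws G -> G}.
Implicit Types (f g h k : T).

(* Junk value 0 when f is not summable over A. *)
Definition kalton_ext f : G := xget 0 (has_sum A f).

Lemma has_sum_kalton_ext {f} : PA A f -> has_sum A f (kalton_ext f).
Proof.
move=> Pf; apply: xgetPex; have [s fs] := AS (cyc_coef f); exists s => U U0.
have [F [fF FA Fs]] := fs U U0; exists F; split => // E fE FE EA.
by rewrite -(fsbig_cyc_coef Pf EA); exact: Fs.
Qed.

Lemma kalton_extE {f} : SA A f -> kalton_ext f = kalton f.
Proof.
by move=> Sf; exact: has_sum_unique hG (has_sum_kalton_ext Sf.1) (has_sum_kalton Sf).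
Qed.

Lemma kalton_extD {f g} : PA A f -> PA A g ->
  kalton_ext (fun x => f x + g x) = kalton_ext f + kalton_ext g.
Proof.
move=> Pf Pg; apply: has_sum_unique hG (has_sum_kalton_ext (PAD Pf Pg)) _.
exact: has_sumD (has_sum_kalton_ext Pf) (has_sum_kalton_ext Pg).
Qed.

Lemma kalton_extB {f g} : PA A f -> PA A g ->
  kalton_ext (fun x => f x - g x) = kalton_ext f - kalton_ext g.
Proof.
move=> Pf Pg; have := kalton_extD (PAB Pf Pg) Pg.
have -> : (fun x => f x - g x + g x) = f by apply: funext => x; rewrite subrK.
by move=> ->; rewrite addrK.
Qed.

Lemma kalton_ext_small_tail {U} : nbhs 0 U -> exists2 C : set G, finite_set C &
  forall k, PA A k -> (forall c, C c -> k c = 0) -> U (kalton_ext k).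
Proof.
move=> U0; have [V V0 VV] := nbhs0_splitD U0.
have [C fC CV] := absolutely_summable_small_blocks AS V0.
exists C => // k Pk k0; have [F [fF FA Fk]] := has_sum_kalton_ext Pk V V0.
have FCA : F `\` C `<=` A by move=> x [/FA].
have kFC : \sum_(a \in F `\` C) k a = \sum_(a \in F) k a.
  apply: fsbig_widen => [x []//|x [Fx nFC]].
  by apply: k0; apply: contrapT => nC; exact: nFC (conj Fx nC).
have kC : V (\sum_(a \in F `\` C) k a).
  rewrite -(fsbig_cyc_coef Pk FCA).
  by apply: CV; [exact: finite_setD|exact: FCA|move=> x []].
by have := VV _ _ (Fk F fF (@subset_refl _ F) FA) kC; rewrite kFC subrK.
Qed.

Lemma kalton_ext_continuous : {within PA A, continuous kalton_ext}.
Proof.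
apply/within_continuous_nbhsP => f Pf N Nf.
have [V V0 VV] := nbhs0_splitD (nbhs_translate0 Nf).
have [C fC CV] := kalton_ext_small_tail V0.
have [W W0 WV] := nbhs0_fsbig fC V0.
apply/nbhs_ptwsP; exists C, (fun c => [set y | W (y - f c)]); split => //.
  by move=> c _; exact: nbhs0_translate W0.
move=> h hW Ph.
pose k : T := fun x => h x - f x; have Pk : PA A k := PAB Ph Pf.
pose k1 := patch (fun=> 0) C k; have Pk1 : PA A k1 := PA_patch C Pk.
pose k2 : T := fun x => k x - k1 x; have Pk2 : PA A k2 := PAB Pk Pk1.
have k12 : kalton_ext k = kalton_ext k1 + kalton_ext k2.
  rewrite -kalton_extD //; congr kalton_ext.
  by apply: funext => x; rewrite /k2 addrC subrK.
have Vk1 : V (kalton_ext k1).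
  rewrite kalton_extE; last exact: SA_patch.
  by rewrite kalton_patch; apply: WV => c Cc; exact: hW.
have Vk2 : V (kalton_ext k2).
  by apply: CV => // c Cc; rewrite /k2 /k1 patchT ?subrr //; exact: mem_set.
by have := VV _ _ Vk1 Vk2; rewrite /= -k12 kalton_extB // subrK.
Qed.

Section Independence.
Hypothesis TI : topologically_independent A.

Lemma kalton_ext_small_coords {W} : nbhs 0 W -> exists2 U : set G, nbhs 0 U &
  forall k, PA A k -> U (kalton_ext k) -> forall a, A a -> W (k a).
Proof.
move=> W0; have [_ /(_ W W0) [U1 [U10 U1W]]] := TI.
have [U U0 UU] := nbhs0_splitD U10.
exists U => // k Pk Uk a Aa.
have [F [fF FA Fk]] := has_sum_kalton_ext Pk _ (nbhs0_oppr U0).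
have fFa : finite_set (F `|` [set a]).
  by rewrite finite_setU; split => //; exact: finite_set1.
have FaA : F `|` [set a] `<=` A by move=> x [/FA|->].
have U1k : U1 (\sum_(b \in F `|` [set a]) b *~ cyc_coef k b).
  rewrite (fsbig_cyc_coef Pk FaA).
  by have := UU _ _ Uk (Fk _ fFa (@subsetUl _ _ _) FaA); rewrite opprB addrC subrK.
by rewrite (cyc_coefE Pk Aa); exact: (U1W _ _ fFa FaA U1k a (or_intror erefl)).
Qed.

Lemma kalton_ext_inj : {in PA A &, injective kalton_ext}.
Proof.
move=> f g /set_mem Pf /set_mem Pg fg; apply: funext => x.
have [Ax|nAx] := pselect (A x); last by rewrite Pf.2 ?Pg.2.
apply/eqP; rewrite -subr_eq0; apply/eqP; apply: hausdorff_eq0 => // W W0.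
have [U U0 UW] := kalton_ext_small_coords W0.
apply: (UW _ (PAB Pf Pg)) => //.
by rewrite kalton_extB // fg subrr; exact: nbhs_singleton.
Qed.

Lemma kalton_ext_open f : PA A f -> forall N, within (PA A) (nbhs f) N ->
  exists V, nbhs (kalton_ext f) V /\ (forall h, PA A h -> V (kalton_ext h) -> N h).
Proof.
move=> Pf N /nbhs_ptwsP [C [B [fC Bf NB]]].
pose W := [set w | forall c, C c -> B c (w + f c)].
have W0 : nbhs 0 W.
  by apply: filter_finite_bigI => // c Cc; apply: nbhs_translate0; exact: Bf.
have [U U0 UW] := kalton_ext_small_coords W0.
exists [set y | U (y - kalton_ext f)]; split; first exact: nbhs0_translate U0.
move=> h Ph Uh; apply: NB => // c Cc.
have [Ac|nAc] := pselect (A c).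
  have := UW _ (PAB Ph Pf) _ c Ac.
  by rewrite kalton_extB // => /(_ Uh c Cc); rewrite subrK.
by rewrite Ph.2 // -(Pf.2 c nAc); exact: nbhs_singleton (Bf c Cc).
Qed.

End Independence.
End KaltonExtension.

Lemma kalton_condition_of_summable_independent (G : topologicalZmodType)
    (A : set G) : hausdorff_space G -> absolutely_summable A ->
  topologically_independent A -> kalton_condition A.
Proof.
move=> hG AS TI; split.
  apply: (@subspace_eq_continuous _ _ _ (kalton_ext A)).
    by move=> f /set_mem Sf; exact: kalton_extE.
  apply: (continuous_subspaceW (B := PA A)); first by move=> f [].
  exact: kalton_ext_continuous.
exists (kalton_ext A); split.
- by move=> f; exact: kalton_extE.
- by move=> f g; exact: kalton_extD.
- split; first exact: kalton_ext_continuous.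
    exact: kalton_ext_inj.
  exact: kalton_ext_open.
Qed.

Section KaltonEmbedding.
Context {G : topologicalZmodType} {A : set G} (Psi : {ptws G -> G} -> G).
Hypotheses (Psi_kalton : forall f, SA A f -> Psi f = kalton f)
  (Psi_emb : top_embedding (PA A) Psi).

Lemma absolutely_summable_of_kalton_embedding : absolutely_summable A.
Proof.
have [Psi_cont _ _] := Psi_emb.
move=> z; pose f := patch (fun=> 0) A (fun a => a *~ z a).
have Pf : PA A f := PA_multiples z.
exists (Psi f) => U U0.
have Nf : nbhs (Psi f) [set y | U (Psi f - y)].
  by apply: filterS (nbhs0_translate (nbhs0_oppr U0)) => y /=; rewrite opprB.
have /nbhs_ptwsP [C [B [fC Bf NB]]] :=
  (within_continuous_nbhsP _ _ _ _).1 Psi_cont f Pf _ Nf.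
exists (C `&` A); split; [by apply: finite_setI; left|by move=> x []|].
move=> E fE CE EA; pose h := patch (fun=> 0) E f.
have hf c : C c -> h c = f c.
  move=> Cc; have [Ec|nEc] := pselect (E c).
    by rewrite /h patchT //; exact: mem_set.
  rewrite /h /f !patchC //; apply: mem_set => // Ac.
  exact: nEc (CE c (conj Cc Ac)).
have Sh : SA A h := SA_patch Pf fE.
have := NB h _ Sh.1; rewrite /= (Psi_kalton _ Sh) kalton_patch.
have -> : \sum_(x \in E) f x = \sum_(a \in E) a *~ z a.
  by apply: eq_fsbigr => x /set_mem Ex; rewrite /f patchT //; exact/mem_set/EA.
by apply => c Cc; rewrite hf //; exact: nbhs_singleton (Bf c Cc).
Qed.

Lemma topologically_independent_of_kalton_embedding :
  ~ A 0 -> topologically_independent A.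
Proof.
move=> nA0; split => // W W0; have [Psi_cont _ Psi_open] := Psi_emb.
have Psi0 : Psi (fun=> 0) = 0.
  have S0 : SA A (patch (fun=> 0) set0 (fun=> 0)) := SA_patch PA0 (finite_set0 G).
  by move: (Psi_kalton _ S0); rewrite kalton_patch fsbig_set0 patch_set0.
have WPsi0 : nbhs (Psi (fun=> 0)) W by rewrite Psi0.
have /nbhs_ptwsP [C [B [fC Bf NB]]] :=
  (within_continuous_nbhsP _ _ _ _).1 Psi_cont _ PA0 W WPsi0.
have CW : within (PA A) (nbhs ((fun=> 0) : {ptws G -> G}))
    [set y | forall c, C c -> W (y c)].
  apply/nbhs_ptwsP; exists C, (fun=> W); split => //.
have [U [U0 UW]] := Psi_open _ PA0 _ CW; rewrite Psi0 in U0.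
exists U; split => // F z fF FA UF a Fa.
pose g := patch (fun=> 0) A (fun x => x *~ z x); have Pg : PA A g := PA_multiples z.
have ga x : A x -> g x = x *~ z x by move=> Ax; rewrite /g patchT //; exact: mem_set.
have [Ca|nCa] := pselect (C a).
  pose h := patch (fun=> 0) F g; have Sh : SA A h := SA_patch Pg fF.
  have Psih : Psi h = \sum_(x \in F) x *~ z x.
    rewrite Psi_kalton // kalton_patch.
    by apply: eq_fsbigr => x /set_mem Fx; exact: ga (FA _ Fx).
  have := UW h Sh.1; rewrite Psih => /(_ UF a Ca).
  by rewrite /h patchT ?ga //; [exact: FA|exact: mem_set].
pose d := patch (fun=> 0) [set a] g; have Sd : SA A d := SA_patch Pg (finite_set1 a).
have <- : Psi d = a *~ z a.
  by rewrite Psi_kalton // kalton_patch fsbig_set1 ga //; exact: FA.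
apply: NB Sd.1 => c Cc; rewrite /d patchC; first exact: nbhs_singleton (Bf c Cc).
by apply: mem_set => /= ca; apply: nCa; rewrite -ca.
Qed.

End KaltonEmbedding.

Theorem theorem7p2 (G : topologicalZmodType) (A : set G) :
  hausdorff_space G -> ~ A 0 ->
  (kalton_condition A <->
   absolutely_summable A /\ topologically_independent A).
Proof.
move=> hG nA0; split => [[_ [Psi [Psi_kalton _ Psi_emb]]]|[AS TI]].
  split; first exact: absolutely_summable_of_kalton_embedding Psi_kalton Psi_emb.
  exact: topologically_independent_of_kalton_embedding Psi_kalton Psi_emb nA0.
exact: kalton_condition_of_summable_independent.
Qed.
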